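(* Let $L$ be a distributive lattice, $n\ge1$, $a_i,b_i\in L$ with $a_i<b_i$ for $i\in[n]$, $\widehat{\mathbf e}_I\in L^n$ ($I\subseteq[n]$) the tuple with $i$-th component $b_i$ if $i\in I$ and $a_i$ otherwise, $D=\{\widehat{\mathbf e}_I:I\subseteq[n]\}$, and $f\colon D\to L$. If there is a lattice polynomial function $p\colon L^n\to L$ with $p|_D=f$, then $f$ is monotone and satisfies $$f(\widehat{\mathbf e}_{I\cup\{k\}})\wedge a_k\le f(\widehat{\mathbf e}_I)\le f(\widehat{\mathbf e}_{I\setminus\{k\}})\vee b_k\quad\text{for all } I\subseteq[n],\ k\in[n].$$
   Context: A lattice polynomial function is a composition of $\wedge$, $\vee$, projections and constants from $L$. $f$ monotone means $I\subseteq J\Rightarrow f(\widehat{\mathbf e}_I)\le f(\widehat{\mathbf e}_J)$. *)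

From HB Require Import structures.
From mathcomp Require Import all_boot all_order.
Set Implicit Arguments. Unset Strict Implicit. Unset Printing Implicit Defensive.
Import Order.Theory.
Local Open Scope order_scope.

Inductive lpoly (L : Type) (n : nat) : Type :=
  | LPVar of 'I_n
  | LPConst of L
  | LPMeet of lpoly L n & lpoly L n
  | LPJoin of lpoly L n & lpoly L n.

Fixpoint lpeval (d : Order.disp_t) (L : latticeType d) (n : nat)
    (p : lpoly L n) (x : 'I_n -> L) : L :=
  match p with
  | LPVar i => x i
  | LPConst c => c
  | LPMeet p q => lpeval p x `&` lpeval q x
  | LPJoin p q => lpeval p x `|` lpeval q x
  end.

Definition is_lattice_polynomial_function (d : Order.disp_t) (L : latticeType d)
    (n : nat) (g : ('I_n -> L) -> L) : Prop :=
  exists p : lpoly L n, forall x, g x = lpeval p x.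

Definition ehat (L : Type) (n : nat) (a b : 'I_n -> L) (I : {set 'I_n}) : 'I_n -> L :=
  fun i => if i \in I then b i else a i.

From mathcomp Require Import all_boot all_order.
Set Implicit Arguments. Unset Strict Implicit. Unset Printing Implicit Defensive.
Import Order.Theory.
Local Open Scope order_scope.

(* Lattice polynomial functions are monotone, which gives monotonicity of F.
   In a distributive lattice, meeting the value of a polynomial with a constant
   c can be pushed down to its variables; hence if x <= y off the variable k,
   then x k `&` c <= y k is enough to get p(x) `&` c <= p(y).  With
   x = e_{I + k}, y = e_I and c = a_k this is the lower bound; the upper bound
   is the dual argument with joins and b_k. *)

Section LatticePolynomial.
Variables (d : Order.disp_t) (n : nat).

Lemma lpeval_le (L : latticeType d) (p : lpoly L n) (x y : 'I_n -> L) :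
  (forall i, x i <= y i) -> lpeval p x <= lpeval p y.
Proof.
move=> le_xy; elim: p => [i|c|p IHp q IHq|p IHp q IHq] //=.
- exact: leI2.
- exact: leU2.
Qed.

Variable L : distrLatticeType d.

Lemma lpeval_meet_le (p : lpoly L n) (k : 'I_n) (x y : 'I_n -> L) (c : L) :
  (forall i, i != k -> x i <= y i) -> x k `&` c <= y k ->
  lpeval p x `&` c <= lpeval p y.
Proof.
move=> le_xy le_k; elim: p => [i|c'|p IHp q IHq|p IHp q IHq] /=.
- by case: (eqVneq i k) => [->|ne] //; exact: leIxl (le_xy _ ne).
- exact: leIl.
- rewrite lexI; apply/andP; split.
  + by apply: le_trans IHp; apply: leI2 => //; exact: leIl.
  + by apply: le_trans IHq; apply: leI2 => //; exact: leIr.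
- by rewrite meetUl; exact: leU2.
Qed.

Lemma lpeval_le_join (p : lpoly L n) (k : 'I_n) (x y : 'I_n -> L) (c : L) :
  (forall i, i != k -> x i <= y i) -> x k <= y k `|` c ->
  lpeval p x <= lpeval p y `|` c.
Proof.
move=> le_xy le_k; elim: p => [i|c'|p IHp q IHq|p IHp q IHq] /=.
- by case: (eqVneq i k) => [->|ne] //; exact: lexUl (le_xy _ ne).
- exact: leUl.
- by rewrite joinIl; exact: leI2.
- rewrite leUx; apply/andP; split.
  + by apply: le_trans IHp _; apply: leU2 => //; exact: leUl.
  + by apply: le_trans IHq _; apply: leU2 => //; exact: leUr.
Qed.

End LatticePolynomial.

Section Ehat.
Variables (n : nat) (T : Type) (a b : 'I_n -> T).

Lemma ehat_setU1_neq (I : {set 'I_n}) (k i : 'I_n) :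
  i != k -> ehat a b (k |: I) i = ehat a b I i.
Proof. by move=> ne; rewrite /ehat !inE (negbTE ne). Qed.

Lemma ehat_setD1_neq (I : {set 'I_n}) (k i : 'I_n) :
  i != k -> ehat a b (I :\ k) i = ehat a b I i.
Proof. by move=> ne; rewrite /ehat !inE ne. Qed.

End Ehat.

Section EhatOrder.
Variables (d : Order.disp_t) (L : porderType d) (n : nat) (a b : 'I_n -> L).
Hypothesis le_ab : forall i, a i <= b i.

Lemma ehat_ge (I : {set 'I_n}) (i : 'I_n) : a i <= ehat a b I i.
Proof. by rewrite /ehat; case: ifP. Qed.

Lemma ehat_le (I : {set 'I_n}) (i : 'I_n) : ehat a b I i <= b i.
Proof. by rewrite /ehat; case: ifP. Qed.

Lemma ehat_subset (I J : {set 'I_n}) (i : 'I_n) :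
  I \subset J -> ehat a b I i <= ehat a b J i.
Proof.
move=> /subsetP sIJ; rewrite /ehat.
by case: ifP => iI; [rewrite sIJ | case: ifP].
Qed.

End EhatOrder.

Theorem lemma3p2 (d : Order.disp_t) (L : distrLatticeType d) (n : nat)
    (a b : 'I_n -> L) (F : {set 'I_n} -> L) :
  (0 < n)%N ->
  (forall i, a i < b i) ->
  (exists p : ('I_n -> L) -> L,
      is_lattice_polynomial_function p /\
      forall I : {set 'I_n}, p (ehat a b I) = F I) ->
  (forall I J : {set 'I_n}, I \subset J -> F I <= F J) /\
  (forall (I : {set 'I_n}) (k : 'I_n),
      F (k |: I) `&` a k <= F I /\ F I <= F (I :\ k) `|` b k).
Proof.
move=> _ lt_ab [g [[p g_p] g_F]].
have le_ab i : a i <= b i by exact: ltW.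
split=> [I J sIJ | I k].
  by rewrite -!g_F !g_p; apply: lpeval_le => i; exact: ehat_subset.
rewrite -!g_F !g_p; split.
- apply: (@lpeval_meet_le _ _ _ p k) => [i ne|].
    by rewrite ehat_setU1_neq.
  by apply: leIxr; exact: ehat_ge.
- apply: (@lpeval_le_join _ _ _ p k) => [i ne|].
    by rewrite ehat_setD1_neq.
  by apply: lexUr; exact: ehat_le.
Qed.
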